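(* Let $G$ be a graph, let $\mathcal H$ be a family of subgraphs of $G$ each inducing a connected subgraph, and suppose $G$ has a tree decomposition that is $k$-sparse with respect to $\mathcal H$. Then $(G,\mathcal H)$ admits a dual support $Q^*$ with $\mathrm{tw}(Q^* )\le k$.
   Context: A subgraph $H$ of $G$ is identified with its vertex set $V(H)$. A tree decomposition $(T,\{B_z\})$ of $G$ is $k$-sparse with respect to $\mathcal H$ if every bag $B_z$ intersects at most $k$ members of $\mathcal H$. A dual support for $(G,\mathcal H)$ is a graph $Q^*$ whose vertex set is $\mathcal H$ (one vertex per member) such that for every $v\in V(G)$ the set $\mathcal H_v=\{H\in\mathcal H: v\in V(H)\}$ induces a connected subgraph of $Q^*$. $\mathrm{tw}$ denotes treewidth. *)

From mathcomp Require Import all_boot.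
Set Implicit Arguments. Unset Strict Implicit. Unset Printing Implicit Defensive.

Definition simple_graph (V : finType) (g : rel V) : Prop :=
  symmetric g /\ irreflexive g.

(* The vertex set S induces a connected subgraph of g
   (convention: the empty set is connected). *)
Definition connected_in (V : finType) (g : rel V) (S : {set V}) : Prop :=
  forall x y, x \in S -> y \in S ->
    connect (fun a b => [&& g a b, a \in S & b \in S]) x y.

Definition acyclic (V : finType) (g : rel V) : Prop :=
  ~ exists s : seq V, [/\ 2 < size s, uniq s & cycle g s].

Definition is_tree (T : finType) (t : rel T) : Prop :=
  [/\ 0 < #|T|, simple_graph t, connected_in t [set: T] & acyclic t].

Definition tree_decomposition (V : finType) (g : rel V)
    (T : finType) (t : rel T) (B : T -> {set V}) : Prop :=
  [/\ is_tree t,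
      (forall v : V, exists z : T, v \in B z),
      (forall u v : V, g u v -> exists z : T, (u \in B z) && (v \in B z))
    & (forall v : V, connected_in t [set z | v \in B z])].

Definition k_sparse (V : finType) (T : finType) (B : T -> {set V})
    (I : finType) (H : I -> {set V}) (k : nat) : Prop :=
  forall z : T, #|[set i : I | [exists v in B z, v \in H i]]| <= k.

Definition tw_le (V : finType) (g : rel V) (k : nat) : Prop :=
  exists (T : finType) (t : rel T) (B : T -> {set V}),
    tree_decomposition g t B /\ forall z : T, #|B z| <= k.+1.

(* Q is a dual support for (G, H): vertices are the members of H (indices i : I)
   and for every v the set H_v = {i | v \in H i} is connected in Q. *)
Definition dual_support (V : finType) (I : finType) (H : I -> {set V})
    (Q : rel I) : Prop :=
  simple_graph Q /\ forall v : V, connected_in Q [set i | v \in H i].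

From mathcomp Require Import all_boot.
Set Implicit Arguments. Unset Strict Implicit. Unset Printing Implicit Defensive.

(* Take for Q the intersection graph of the traces: i ~ j when H i and H j meet a
   common bag.  Each H_v is then a clique of Q, since v lies in some bag.  Replacing
   every bag B z of the given decomposition by the set of members meeting it yields a
   tree decomposition of Q: members meeting both ends of an edge share a bag, and the
   bags met by a connected H i form a subtree, because every edge of H i lies in a bag
   and the bags containing a vertex form a subtree.  By sparsity these bags have at
   most k elements.  Members with H i empty are isolated in Q; they get pendant
   leaves with singleton bags. *)

Lemma homo_connect (A C : finType) (e : rel A) (e' : rel C) (f : A -> C) :
  {homo f : x y / e x y >-> e' x y} ->
  {homo f : x y / connect e x y >-> connect e' x y}.
Proof.
move=> fh x y /connectP[p xp ->]; apply/connectP; exists (map f p) => //.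
  exact: homo_path xp.
by rewrite last_map.
Qed.

Lemma connected_setT (A : finType) (e : rel A) :
  connected_in e [set: A] <-> forall x y, connect e x y.
Proof.
have eT : (fun a b => [&& e a b, a \in [set: A] & b \in [set: A]]) =2 e.
  by move=> a b; rewrite !inE !andbT.
split=> eC x y; first by rewrite -(eq_connect eT x y); apply: eC; rewrite inE.
by rewrite (eq_connect eT x y).
Qed.

Lemma connected_in_imset (A C : finType) (e : rel A) (e' : rel C) (f : A -> C)
    (S : {set A}) :
  {homo f : x y / e x y >-> e' x y} -> connected_in e S -> connected_in e' (f @: S).
Proof.
move=> fh SC _ _ /imsetP[x xS ->] /imsetP[y yS ->].
apply: homo_connect (SC x y xS yS) => a b /and3P[ab aS bS].
by rewrite fh ?imset_f.
Qed.

Section AttachLeaves.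
Variables (T I : finType) (t : rel T) (anchor : I -> T).

Definition attach_leaves (a b : T + I) : bool :=
  match a, b with
  | inl x, inl y => t x y
  | inl x, inr i => x == anchor i
  | inr i, inl y => y == anchor i
  | inr _, inr _ => false
  end.

Let getl (a : T + I) : option T := if a is inl z then Some z else None.

Lemma attach_leaves_acyclic : acyclic t -> acyclic attach_leaves.
Proof.
move=> tA [s [s3 us cs]].
case: (boolP (all getl s)) => [sl | /allPn[a sa]].
  have getlK : ocancel getl inl by case.
  have s_inl : s = map inl (pmap getl s).
    by rewrite pmap_filter //; apply/esym/all_filterP.
  apply: tA; exists (pmap getl s).
  rewrite s_inl size_map (map_inj_uniq (@inl_inj _ _)) cycle_map in s3 us cs.
  by split.
(* A leaf on the cycle would have both of its cycle neighbours equal to its anchor. *)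
case: a sa => [//|i] si _.
have [n s' s_rot] := rot_to si.
move: s3 us cs; rewrite -(size_rot n) -(rot_uniq n) -(rot_cycle n) s_rot.
case: s' {s_rot} => [|b m] //; case/lastP: m => [|m d] //= _.
rewrite rcons_path last_rcons => + /and3P[ib _ di].
case: b ib => // b /eqP ->; case: d di => // d /eqP ->.
by rewrite mem_rcons inE eqxx andbF.
Qed.

Lemma attach_leaves_tree : is_tree t -> is_tree attach_leaves.
Proof.
case=> T0 [tsym tirr] /connected_setT tC tA; split.
- by rewrite card_sum addn_gt0 T0.
- by split; [case=> x [] y //=; rewrite tsym | case=> x //=; rewrite tirr].
- apply/connected_setT.
  pose base a := match a with inl z => z | inr i => anchor i end.
  have to_base a : connect attach_leaves a (inl (base a)).
    by case: a => [x|i]; [apply: connect0 | apply: connect1 => /=].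
  have from_base a : connect attach_leaves (inl (base a)) a.
    by case: a => [x|i]; [apply: connect0 | apply: connect1 => /=].
  move=> a b; apply: connect_trans (to_base a) (connect_trans _ (from_base b)).
  exact: homo_connect (tC _ _).
- exact: attach_leaves_acyclic.
Qed.

End AttachLeaves.

Lemma tree_decomposition_connected_trace (V : finType) (g : rel V) (T : finType)
    (t : rel T) (B : T -> {set V}) (S : {set V}) :
  tree_decomposition g t B -> connected_in g S ->
  connected_in t [set z | [exists v in B z, v \in S]].
Proof.
case=> _ _ edge_bag vertex_bags SC z1 z2.
set S' := [set z | _]; set tS' := fun a b => [&& t a b, a \in S' & b \in S'].
have bags_of v : v \in S -> forall a b, v \in B a -> v \in B b -> connect tS' a b.
  move=> vS a b va vb; have := vertex_bags v a b; rewrite !inE => /(_ va vb).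
  apply: connect_sub => x y /and3P[xy]; rewrite !inE => vx vy; apply: connect1.
  rewrite /tS' xy !inE; apply/and3P; split=> //.
    by apply/existsP; exists v; rewrite vx vS.
  by apply/existsP; exists v; rewrite vy vS.
rewrite /S' !inE => /existsP[v1 /andP[v1z1 v1S]] /existsP[v2 /andP[v2z2 v2S]].
have /connectP[p p_path v2_last] := SC v1 v2 v1S v2S.
rewrite {v2 v2S}v2_last in v2z2.
elim: p v1 z1 v1z1 v1S p_path v2z2 => [|v p IHp] u z uz uS /=.
  by move=> _; apply: bags_of.
case/andP=> /and3P[uv _ vS] p_path vp_z2.
have [z' /andP[uz' vz']] := edge_bag u v uv.
exact: connect_trans (bags_of u uS z z' uz uz') (IHp v z' vz' vS p_path vp_z2).
Qed.

Section TraceGraph.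
Variables (V T I : finType) (B : T -> {set V}) (H : I -> {set V}).

Definition bag_trace (z : T) : {set I} := [set i | [exists v in B z, v \in H i]].

Definition trace_graph (i j : I) : bool :=
  (i != j) && [exists z, (i \in bag_trace z) && (j \in bag_trace z)].

Lemma trace_graph_simple : simple_graph trace_graph.
Proof.
split=> [i j | i]; last by rewrite /trace_graph eqxx.
rewrite /trace_graph eq_sym; congr (_ && _).
by apply/existsP/existsP => -[z ijz]; exists z; rewrite andbC.
Qed.

Lemma trace_graph_dual_support :
  (forall v, exists z, v \in B z) -> dual_support H trace_graph.
Proof.
move=> cover; split; first exact: trace_graph_simple.
move=> v i j; rewrite !inE => vi vj; have [z vz] := cover v.
have [->|ij] := eqVneq i j; first exact: connect0.
apply: connect1; rewrite !inE vi vj /trace_graph ij !andbT /=.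
apply/existsP; exists z; rewrite !inE.
by apply/andP; split; apply/existsP; exists v; apply/andP.
Qed.

Definition trace_bag (a : T + I) : {set I} :=
  match a with
  | inl z => bag_trace z
  | inr i => if H i == set0 then [set i] else set0
  end.

Lemma mem_trace_bag_empty i a : H i = set0 -> (i \in trace_bag a) = (a == inr i).
Proof.
move=> Hi0; case: a => [z|j] /=.
  by rewrite inE Hi0; apply/existsP => -[v /andP[_]]; rewrite inE.
have [Hj0|Hj] := eqVneq (H j) set0; first by rewrite inE eq_sym.
by rewrite inE; apply/esym/eqP => -[ji]; rewrite ji Hi0 eqxx in Hj.
Qed.

Lemma mem_trace_bag_nonempty i a :
  H i != set0 -> (i \in trace_bag a) = if a is inl z then i \in bag_trace z else false.
Proof.
move=> Hi; case: a => [//|j] /=.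
have [Hj0|] := eqVneq (H j) set0; last by rewrite inE.
by rewrite inE; apply/negbTE/eqP => ij; rewrite ij Hj0 eqxx in Hi.
Qed.

Lemma trace_tree_decomposition (g : rel V) (t : rel T) (z0 : T) :
  tree_decomposition g t B -> (forall i, connected_in g (H i)) ->
  tree_decomposition trace_graph (attach_leaves t (fun=> z0)) trace_bag.
Proof.
move=> td HC; have [tT cover _ _] := td; split.
- exact: attach_leaves_tree.
- move=> i; have [Hi0|/set0Pn[v vi]] := eqVneq (H i) set0.
    by exists (inr i); rewrite mem_trace_bag_empty.
  have [z vz] := cover v.
  by exists (inl z); rewrite /= inE; apply/existsP; exists v; apply/andP.
- by move=> i j /andP[_ /existsP[z ijz]]; exists (inl z).
- move=> i; have [Hi0|Hi] := eqVneq (H i) set0.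
    move=> a b; rewrite !inE !mem_trace_bag_empty // => /eqP-> /eqP->.
    exact: connect0.
  have -> : [set a | i \in trace_bag a] = inl @: [set z | [exists v in B z, v \in H i]].
    apply/setP => -[z|j]; rewrite inE mem_trace_bag_nonempty //.
      by rewrite mem_imset ?inE //; apply: inl_inj.
    by apply/esym/imsetP => -[].
  exact: connected_in_imset (tree_decomposition_connected_trace td (HC i)).
Qed.

End TraceGraph.

Theorem mainTheorem10 (V : finType) (g : rel V) (I : finType)
    (H : I -> {set V}) (k : nat) :
  simple_graph g ->
  (forall i : I, connected_in g (H i)) ->
  (exists (T : finType) (t : rel T) (B : T -> {set V}),
      tree_decomposition g t B /\ k_sparse B H k) ->
  exists Q : rel I, dual_support H Q /\ tw_le Q k.
Proof.
move=> _ HC [T [t [B [td sparse]]]].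
have [[T_gt0 _ _ _] cover _ _] := td; have [z0 _] := card_gt0P T_gt0.
exists (trace_graph B H); split; first exact: trace_graph_dual_support.
exists (T + I)%type, (attach_leaves t (fun=> z0)), (trace_bag B H); split.
  exact: trace_tree_decomposition td HC.
case=> [z|i] /=; first exact: leq_trans (sparse z) _.
by case: ifP; rewrite ?cards1 ?cards0.
Qed.
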